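(* Every prime tournament which is not isomorphic to $P_n$ for any $n$ has at most one matching ordering.
   Context: A tournament is a finite, non-null, loopless directed graph in which for any two distinct vertices $u,v$ there is exactly one edge with both ends in $\{u,v\}$; write $u\to v$ for the edge from $u$ to $v$. A homogeneous set of $G$ is a set $X\subseteq V(G)$ such that each vertex outside $X$ either has edges to all of $X$ or edges from all of $X$; $G$ is prime if every homogeneous set $X$ has $|X|\le1$ or $X=V(G)$. Given an ordering $v_1,\dots,v_n$ of the vertices, a backedge is an edge $v_j\to v_i$ with $j>i$; the ordering is a matching ordering if every vertex is the head or tail of at most one backedge. $P_n$ is the tournament on $v_1,\dots,v_n$ with $v_i\to v_j$ if $j-i\ge2$ and $v_{i+1}\to v_i$ for $1\le i\le n-1$. *)

From mathcomp Require Import all_boot.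
Set Implicit Arguments. Unset Strict Implicit. Unset Printing Implicit Defensive.

Definition tournament (V : finType) (e : rel V) : Prop :=
  0 < #|V| /\
  (forall v, ~~ e v v) /\
  (forall u v, u != v -> e u v = ~~ e v u).

Definition homogeneous (V : finType) (e : rel V) (X : {set V}) : Prop :=
  forall w, w \notin X ->
    (forall x, x \in X -> e w x) \/ (forall x, x \in X -> e x w).

Definition prime_tournament (V : finType) (e : rel V) : Prop :=
  forall X : {set V}, homogeneous e X -> #|X| <= 1 \/ X = setT.

Definition vertex_ordering (V : finType) (s : seq V) : Prop :=
  uniq s /\ forall v, v \in s.

(* Backedges of s incident with v: v -> w with w earlier than v (v is the tail),
   or w -> v with w later than v (v is the head).  Each such backedge is
   determined by its other end w. *)
Definition backedge_nbrs (V : finType) (e : rel V) (s : seq V) (v : V) : {set V} :=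
  [set w | (e v w && (index w s < index v s)) || (e w v && (index v s < index w s))].

Definition matching_ordering (V : finType) (e : rel V) (s : seq V) : Prop :=
  vertex_ordering s /\ forall v, #|backedge_nbrs e s v| <= 1.

Definition Pn_rel (n : nat) : rel 'I_n :=
  fun i j => (i.+2 <= j) || (i == j.+1 :> nat).

Definition iso_to_Pn (V : finType) (e : rel V) (n : nat) : Prop :=
  exists f : 'I_n -> V, bijective f /\ forall i j, e (f i) (f j) = Pn_rel i j.

From mathcomp Require Import all_boot zify.
Set Implicit Arguments. Unset Strict Implicit. Unset Printing Implicit Defensive.

(* Call a pair of vertices inverted when two matching orderings order it differently.
   An inverted pair is a backedge of exactly one of the two orderings, so in the
   inversion graph every vertex has degree at most two, its inversions alternating
   between the backedges of the two orderings.  Take a maximal induced path of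
   inversions.  If some vertex is inverted with both ends, the path closes into an
   inversion cycle; alternation makes it even, and comparing positions in the first
   ordering rules out length >= 6, so it is a 4-cycle.  Otherwise the vertex set of the
   path is closed under inversion.  Either way we get a connected set closed under
   inversion; a vertex outside it has no backedge into it, lies on one side of it in
   the first ordering and so dominates it or is dominated by it.  By primality the set
   is everything, and the edges along the path (or cycle) then show that the
   tournament is P_n (or P_4). *)

Lemma ltn_chain (x y z : nat) :
  x != y -> y != z -> (x < y) = (y < z) -> (x < z) = (x < y).
Proof. by case: (ltngtP x y); case: (ltngtP y z) => //= *; lia. Qed.

Section Orderings.
Variable V : finType.

Lemma ordering_index_inj (s : seq V) : vertex_ordering s -> injective (index ^~ s).
Proof. by case=> _ mem_s u v; apply: index_inj. Qed.

Lemma ltn_index_flip (s : seq V) u v : vertex_ordering s -> u != v ->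
  (index v s < index u s) = ~~ (index u s < index v s).
Proof.
move=> os; rewrite -(inj_eq (ordering_index_inj os)).
by case: ltngtP.
Qed.

Section TwoOrderings.
Variables (s1 s2 : seq V).
Hypotheses (o1 : vertex_ordering s1) (o2 : vertex_ordering s2).
Local Notation p v := (index v s1).
Local Notation q v := (index v s2).

Definition inverted (u v : V) := (p u < p v) != (q u < q v).

Lemma invertedC u v : inverted u v = inverted v u.
Proof.
case: (eqVneq u v) => [->//|nuv].
by rewrite /inverted (ltn_index_flip o1 nuv) (ltn_index_flip o2 nuv); do 2!case: (_ < _).
Qed.

Lemma inverted_neq u v : inverted u v -> u != v.
Proof. by apply: contraTneq => ->; rewrite /inverted !ltnn. Qed.

Lemma ltn_index_ninverted u v : ~~ inverted u v -> (p u < p v) = (q u < q v).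
Proof. by rewrite negbK => /eqP. Qed.

Lemma inverted_same_side a b c : inverted a b -> ~~ inverted a c -> ~~ inverted b c ->
  c != a -> c != b -> (p a < p c) = (p b < p c).
Proof.
move=> iab /ltn_index_ninverted iac /ltn_index_ninverted ibc nca ncb.
apply: contraTeq iab => between; rewrite negbK.
have nab : a != b by apply: contraNneq between => ->.
have nbc : b != c by rewrite eq_sym.
have pchain : (p a < p c) = (p c < p b).
  by move: between; rewrite (ltn_index_flip o1 nbc); do 2!case: (_ < _).
have qchain : (q a < q c) = (q c < q b).
  by rewrite -iac pchain (ltn_index_flip o1 nbc) (ltn_index_flip o2 nbc) ibc.
rewrite (ltn_chain _ _ pchain) ?(ltn_chain _ _ qchain) ?iac //.
all: by rewrite ?(inj_eq (ordering_index_inj o1)) ?(inj_eq (ordering_index_inj o2)) // eq_sym.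
Qed.

Lemma inverted_not_between a b c : inverted a b -> inverted b c -> ~~ inverted a c ->
  a != c -> (p a < p b) = (p c < p b).
Proof.
move=> iab ibc iac nac; apply: contraNeq iac => between.
have nab := inverted_neq iab; have nbc := inverted_neq ibc.
have qflip u v : inverted u v -> (q u < q v) = ~~ (p u < p v).
  by rewrite /inverted; do 2!case: (_ < _).
have pchain : (p a < p b) = (p b < p c).
  by move: between; rewrite (ltn_index_flip o1 nbc); do 2!case: (_ < _).
have qchain : (q a < q b) = (q b < q c) by rewrite !qflip // pchain.
rewrite /inverted (ltn_chain _ _ pchain) ?(ltn_chain _ _ qchain) //.
all: by rewrite ?(inj_eq (ordering_index_inj o1)) ?(inj_eq (ordering_index_inj o2)).
Qed.

Lemma no_inversion_eq (x0 : V) : (forall u v, ~~ inverted u v) -> s1 = s2.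
Proof.
move=> noinv; apply: (@irr_sorted_eq _ (fun u v => p u < p v)).
- by move=> y u v /= h1 h2; apply: ltn_trans h1 h2.
- by move=> u /=; rewrite ltnn.
- by apply/(sortedP x0) => i hi /=; rewrite !index_uniq ?(proj1 o1) //; apply: ltnW.
- apply/(sortedP x0) => i hi /=.
  by rewrite ltn_index_ninverted // !index_uniq ?(proj1 o2) //; apply: ltnW.
- by move=> v; rewrite (proj2 o1) (proj2 o2).
Qed.
End TwoOrderings.
End Orderings.

Section Tournament.
Variables (V : finType) (e : rel V).
Hypothesis tourn : tournament e.

Lemma edge_irr v : e v v = false.
Proof. by case: tourn => _ [irr _]; apply: negbTE. Qed.

Lemma edge_asym u v : u != v -> e u v = ~~ e v u.
Proof. by case: tourn => _ [_ asym]; apply: asym. Qed.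

Definition backedge (s : seq V) (u v : V) := (u != v) && (e u v != (index u s < index v s)).

Lemma backedge_neq s u v : backedge s u v -> u != v.
Proof. by case/andP. Qed.

Lemma edge_backedge s u v : u != v -> e u v = (backedge s u v != (index u s < index v s)).
Proof. by rewrite /backedge => ->; case: (e u v); case: (_ < _). Qed.

Lemma backedgeC s u v : vertex_ordering s -> backedge s u v = backedge s v u.
Proof.
move=> os; rewrite /backedge; case: (eqVneq u v) => [->//|nuv].
by rewrite (edge_asym nuv) (ltn_index_flip os nuv) eq_sym; case: (e v u); case: (_ < _).
Qed.

Lemma mem_backedge_nbrs s v w : vertex_ordering s ->
  (w \in backedge_nbrs e s v) = backedge s v w.
Proof.
move=> os; rewrite inE /backedge; case: (eqVneq v w) => [->|nvw] /=.
  by rewrite edge_irr ltnn.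
rewrite (ltn_index_flip os nvw) (edge_asym (v := v)) 1?eq_sym //.
by case: (e v w); case: (_ < _).
Qed.

Lemma matching_backedge_eq s v a b : matching_ordering e s ->
  backedge s v a -> backedge s v b -> a = b.
Proof.
case=> os deg1; rewrite -!(mem_backedge_nbrs _ _ os) => va vb.
exact: (card_le1_eqP (deg1 v)).
Qed.

Hypothesis prime_e : prime_tournament e.

Lemma prime_no_source v : 2 < #|V| -> ~ (forall w, w != v -> e v w).
Proof.
move=> V3 vsrc; pose X := [set~ v].
have homX : homogeneous e X.
  by move=> w; rewrite !inE negbK => /eqP ->; left => x; rewrite !inE; apply: vsrc.
case: (prime_e homX) => [|XT].
- by rewrite cardsC1; lia.
- by have := in_setT v; rewrite -XT !inE eqxx.
Qed.

Lemma iso_Pn_of_listing (x0 : V) (l : seq V) : uniq l -> (forall v, v \in l) ->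
  (forall i, i.+1 < size l -> e (nth x0 l i.+1) (nth x0 l i)) ->
  (forall i j, i.+2 <= j -> j < size l -> e (nth x0 l i) (nth x0 l j)) ->
  iso_to_Pn e (size l).
Proof.
move=> ul cover back far.
have neq i j : i < size l -> j < size l -> i != j -> nth x0 l i != nth x0 l j.
  by move=> hi hj; rewrite nth_uniq.
exists (fun i : 'I_(size l) => nth x0 l i); split.
  apply: inj_card_bij => [i j /eqP|]; first by rewrite nth_uniq // => /eqP/val_inj.
  by rewrite card_ord -(card_uniqP ul); apply/subset_leq_card/subsetP => v _; apply: cover.
move=> [i hi] [j hj]; rewrite /Pn_rel /=.
case: (ltngtP i j) => hij; last by rewrite hij edge_irr; lia.
- case: (eqVneq j i.+1) => [ji|ji]; last by rewrite far; lia.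
  have nij : nth x0 l i != nth x0 l j by apply: neq; lia.
  by rewrite (edge_asym nij) ji back; lia.
- case: (eqVneq i j.+1) => [ij|ij]; first by rewrite ij back; lia.
  have nij : nth x0 l i != nth x0 l j by apply: neq; lia.
  by rewrite (edge_asym nij) far; lia.
Qed.

Lemma iso_P4_of_dicycle a b c d : uniq [:: a; b; c; d] -> (forall v, v \in [:: a; b; c; d]) ->
  e a b -> e b c -> e c d -> e d a -> iso_to_Pn e 4.
Proof.
move=> u4 cover4 ab bc cd da.
wlog ac_db : a b c d u4 cover4 ab bc cd da / e a c && e d b.
  move=> base; move: (u4); rewrite /= !inE => /and4P[/norP[_ /norP[nac _]] /norP[_ nbd] _ _].
  have bd : ~~ e d b -> e b d by rewrite (edge_asym nbd).
  have ca : ~~ e a c -> e c a by rewrite (edge_asym nac) negbK.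
  have rot_ok k : uniq (rot k [:: a; b; c; d]) /\ forall v, v \in rot k [:: a; b; c; d].
    by rewrite rot_uniq; split => // v; rewrite mem_rot.
  have [u1 c1] := rot_ok 1; have [u2 c2] := rot_ok 2; have [u3 c3] := rot_ok 3.
  case E1: (e a c); case E2: (e d b).
  - by apply: (base a b c d) => //; rewrite E1 E2.
  - by apply: (base b c d a u1 c1); rewrite // bd ?E1 ?E2.
  - by apply: (base d a b c u3 c3); rewrite // ca ?E1 ?E2.
  - by apply: (base c d a b u2 c2); rewrite // ca ?bd ?E1 ?E2.
case/andP: ac_db => ac db.
apply: (iso_Pn_of_listing (x0 := a) (l := rev (rot 1 [:: a; b; c; d]))).
- by rewrite rev_uniq rot_uniq.
- by move=> v; rewrite mem_rev mem_rot.
- by move=> [|[|[|i]]].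
- by move=> [|[|i]] [|[|[|[|j]]]].
Qed.

Lemma iso_P4_of_cycle a b c d : uniq [:: a; b; c; d] -> (forall v, v \in [:: a; b; c; d]) ->
  e a b = e b c -> e b c = e c d -> e c d = e d a -> iso_to_Pn e 4.
Proof.
move=> u4 cover4 abc bcd cda; case ab: (e a b).
  by apply: (iso_P4_of_dicycle u4 cover4); rewrite -?cda -?bcd -?abc.
move: (u4); rewrite /= !inE => /and4P[/norP[nab /norP[_ nad]] /norP[nbc _] ncd _].
have rev4 : [:: a; d; c; b] = rev (rot 1 [:: a; b; c; d]) by [].
apply: (iso_P4_of_dicycle (a := a) (b := d) (c := c) (d := b)).
- by rewrite rev4 rev_uniq rot_uniq.
- by move=> v; rewrite rev4 mem_rev mem_rot.
- by rewrite (edge_asym nad) -cda -bcd -abc ab.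
- by rewrite eq_sym in ncd; rewrite (edge_asym ncd) -bcd -abc ab.
- by rewrite eq_sym in nbc; rewrite (edge_asym nbc) -abc ab.
- by rewrite eq_sym in nab; rewrite (edge_asym nab) ab.
Qed.

Section MatchingPair.
Variables (s1 s2 : seq V) (x0 : V).
Hypotheses (m1 : matching_ordering e s1) (m2 : matching_ordering e s2).
Let o1 := proj1 m1.
Let o2 := proj1 m2.
Let invC := invertedC o1 o2.
Let b1C u v : backedge s1 u v = backedge s1 v u := backedgeC u v o1.
Local Notation inv := (inverted s1 s2).
Local Notation b1 := (backedge s1).
Local Notation b2 := (backedge s2).
Local Notation p v := (index v s1).

Lemma inverted_backedge u v : u != v -> inv u v = (b1 u v != b2 u v).
Proof.
move=> nuv; rewrite /inverted /backedge nuv /=.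
by case: (e u v); do 2!case: (_ < _).
Qed.

Lemma inverted_backedge_or u v : inv u v -> b1 u v || b2 u v.
Proof.
move=> iuv; move: (iuv); rewrite (inverted_backedge (inverted_neq iuv)).
by case: (b1 u v); case: (b2 u v).
Qed.

Lemma inverted_deg2 v a b w : inv v a -> inv v b -> a != b -> inv v w ->
  (w == a) || (w == b).
Proof.
move=> /inverted_backedge_or va /inverted_backedge_or vb nab /inverted_backedge_or vw.
have eq1 := matching_backedge_eq m1 (v := v); have eq2 := matching_backedge_eq m2 (v := v).
case/orP: va => va; case/orP: vb => vb; case/orP: vw => vw.
all: first [ by rewrite (eq1 _ _ vw va) eqxx | by rewrite (eq2 _ _ vw va) eqxx
           | by rewrite (eq1 _ _ vw vb) eqxx orbT | by rewrite (eq2 _ _ vw vb) eqxx orbT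
           | by rewrite (eq1 _ _ va vb) eqxx in nab | by rewrite (eq2 _ _ va vb) eqxx in nab ].
Qed.

Lemma inverted_alternate v a b : inv v a -> inv v b -> a != b -> b1 v a != b1 v b.
Proof.
move=> va vb nab; move: (va) (vb).
rewrite !inverted_backedge ?(inverted_neq va) ?(inverted_neq vb) //.
case E1: (b1 v a); case E2: (b1 v b) => //=.
- by rewrite (matching_backedge_eq m1 E1 E2) eqxx in nab.
- case F1: (b2 v a) => //; case F2: (b2 v b) => //.
  by rewrite (matching_backedge_eq m2 F1 F2) eqxx in nab.
Qed.

Lemma backedge_inverted u v w : b1 u v -> inv u w -> inv u v.
Proof.
move=> buv uw; apply: contraT => nuv.
have buv2 : b2 u v.
  by move: nuv; rewrite (inverted_backedge (backedge_neq buv)) buv; case: (b2 u v).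
case/orP: (inverted_backedge_or uw) => buw.
- by move: nuv; rewrite (matching_backedge_eq m1 buv buw) uw.
- by move: nuv; rewrite (matching_backedge_eq m2 buv2 buw) uw.
Qed.

Lemma inverted_orient a b c : inv a b -> inv b c -> ~~ inv a c -> a != c -> e a b = e b c.
Proof.
move=> iab ibc iac nac; have nab := inverted_neq iab; have nbc := inverted_neq ibc.
have alt := inverted_alternate (v := b) (a := a) (b := c).
rewrite (invC b a) iab ibc nac in alt; have {}alt := alt erefl erefl erefl.
rewrite (edge_backedge s1 nab) (edge_backedge s1 nbc) (inverted_not_between o1 o2 iab ibc iac nac).
rewrite (ltn_index_flip o1 nbc) (backedgeC _ _ o1).
by move: alt; case: (b1 b a); case: (b1 b c); case: (_ < _).
Qed.

Definition induced_path (P : seq V) := uniq P /\ forall i j, i < size P -> j < size P ->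
  inv (nth x0 P i) (nth x0 P j) = (i == j.+1) || (j == i.+1).

Section Path.
Variable P : seq V.
Hypothesis hP : induced_path P.
Local Notation x i := (nth x0 P i).
Local Notation k := (size P).

Lemma ipath_neq i j : i < k -> j < k -> i != j -> x i != x j.
Proof. by move=> hi hj; rewrite (nth_uniq x0 hi hj (proj1 hP)). Qed.

Lemma ipath_mem i : i < k -> x i \in P.
Proof. exact: mem_nth. Qed.

Lemma ipath_inv i : i.+1 < k -> inv (x i) (x i.+1).
Proof. by move=> h; rewrite (proj2 hP) ?eqxx ?orbT // ltnW. Qed.

Lemma ipath_sorted : sorted inv P.
Proof. by apply/(sortedP x0) => i; apply: ipath_inv. Qed.

Lemma ipath_inv_pred i : 0 < i < k -> inv (x i) (x i.-1).
Proof. by case: i => // i /= hi; rewrite invC ipath_inv. Qed.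

Lemma ipath_ninv i j : i.+1 < j -> j < k -> ~~ inv (x i) (x j).
Proof.
by move=> hij hj; rewrite (proj2 hP) //; [apply/negP; case/orP => /eqP|]; lia.
Qed.

Lemma ipath_interior i w : 0 < i -> i.+1 < k -> inv (x i) w -> w \in P.
Proof.
move=> hi0 hik iw.
have pred_i : inv (x i) (x i.-1) by apply: ipath_inv_pred; lia.
have npred : x i.-1 != x i.+1 by apply: ipath_neq; lia.
case/orP: (inverted_deg2 pred_i (ipath_inv hik) npred iw) => /eqP ->.
all: by apply: ipath_mem; lia.
Qed.

Lemma ipath_index_far i j : i.+2 <= j -> j < k -> (p (x i) < p (x j)) = (p (x 0) < p (x 2)).
Proof.
have from0 j' : 2 <= j' -> j' < k -> (p (x 0) < p (x j')) = (p (x 0) < p (x 2)).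
  elim: j' => [//|j' IH] h2 hj'; case: (eqVneq j' 1) => [->//|j'1].
  rewrite -IH; [|lia|lia].
  have n1 : x j'.+1 != x 0 by apply: ipath_neq; lia.
  have n0 : x j' != x 0 by apply: ipath_neq; lia.
  rewrite (ltn_index_flip o1 n1) (ltn_index_flip o1 n0); congr (~~ _); symmetry.
  apply: (inverted_same_side o1 o2) => //.
  - by apply: ipath_inv; lia.
  - by rewrite invC; apply: ipath_ninv; lia.
  - by rewrite invC; apply: ipath_ninv; lia.
  - by rewrite eq_sym.
  - by rewrite eq_sym.
elim: i => [|i IH] hij hj; first exact: from0.
rewrite -IH; [symmetry|lia|lia].
apply: (inverted_same_side o1 o2); first (apply: ipath_inv; lia).
- by apply: ipath_ninv; lia.
- by apply: ipath_ninv; lia.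
- by apply: ipath_neq; lia.
- by apply: ipath_neq; lia.
Qed.

Lemma ipath_edge_far i j : i.+2 <= j -> j < k -> e (x i) (x j) = (p (x 0) < p (x 2)).
Proof.
move=> hij hj; have nij : x i != x j by apply: ipath_neq; lia.
have nb : ~~ b1 (x i) (x j).
  apply/negP => bij; have : ~~ inv (x i) (x j) by apply: ipath_ninv; lia.
  by rewrite (backedge_inverted bij (w := x i.+1)) //; apply: ipath_inv; lia.
by rewrite (edge_backedge s1 nij) (negbTE nb) ipath_index_far //; case: (_ < _).
Qed.

Lemma ipath_edge_consec i : i.+1 < k -> e (x i) (x i.+1) = e (x 0) (x 1).
Proof.
elim: i => [//|i IH] h; rewrite -IH; last lia.
symmetry; apply: inverted_orient.
- by apply: ipath_inv; lia.
- by apply: ipath_inv.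
- by apply: ipath_ninv; lia.
- by apply: ipath_neq; lia.
Qed.

Lemma ipath_backedge_parity i : i.+1 < k -> b1 (x i) (x i.+1) = b1 (x 0) (x 1) (+) odd i.
Proof.
elim: i => [|i IH] h; first by rewrite addbF.
have := inverted_alternate (v := x i.+1) (a := x i) (b := x i.+2).
rewrite invC !ipath_inv ?ipath_neq //; try lia.
move=> /(_ erefl erefl erefl); rewrite b1C IH /=; last lia.
by case: (b1 (x 0) (x 1)); case: (odd i); case: (b1 (x i.+1) (x i.+2)).
Qed.
End Path.

Lemma ipath_rev P : induced_path P -> induced_path (rev P).
Proof.
case=> uP hP; split; first by rewrite rev_uniq.
move=> i j; rewrite size_rev => hi hj; rewrite !nth_rev // hP; [|lia|lia].
have E1 : (size P - i.+1 == (size P - j.+1).+1) = (j == i.+1) by apply/eqP/eqP; lia.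
have E2 : (size P - j.+1 == (size P - i.+1).+1) = (i == j.+1) by apply/eqP/eqP; lia.
by rewrite E1 E2 orbC.
Qed.

Lemma ipath_rcons P w : induced_path P -> w \notin P -> 0 < size P ->
  (forall i, i < size P -> inv (nth x0 P i) w = (i == (size P).-1)) ->
  induced_path (rcons P w).
Proof.
case=> uP hP wP hk hw; split; first by rewrite rcons_uniq wP.
move=> i j; rewrite size_rcons !ltnS !nth_rcons.
case: (ltngtP i (size P)) => // hi _; case: (ltngtP j (size P)) => // hj _.
- exact: hP.
- by rewrite hw //; apply/eqP/idP => [->|/orP[]/eqP]; lia.
- by rewrite invC hw //; apply/eqP/idP => [->|/orP[]/eqP]; lia.
- by rewrite /inverted !ltnn; apply/esym/negP => /orP[]/eqP; lia.
Qed.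

Definition induced_pathb (P : seq V) := uniq P &&
  [forall i : 'I_(size P), forall j : 'I_(size P),
     inv (nth x0 P i) (nth x0 P j) == (i == j.+1 :> nat) || (j == i.+1 :> nat)].

Lemma induced_pathP P : reflect (induced_path P) (induced_pathb P).
Proof.
apply: (iffP andP) => [[uP /forallP hP]|[uP hP]]; split => //.
- by move=> i j hi hj; move: (hP (Ordinal hi)) => /forallP /(_ (Ordinal hj)) /eqP.
- by apply/forallP => i; apply/forallP => j; apply/eqP; apply: hP.
Qed.

Lemma exists_max_ipath P0 : induced_path P0 -> exists P,
  [/\ induced_path P, size P0 <= size P & forall R, induced_path R -> size R <= size P].
Proof.
move=> hP0; pose has_ipath n := [exists t : n.-tuple V, induced_pathb t].
have has_size R : induced_path R -> has_ipath (size R).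
  by move=> hR; apply/existsP; exists (in_tuple R); apply/induced_pathP.
have bounded n : has_ipath n -> n <= #|V|.
  move=> /existsP [t /induced_pathP [ut _]].
  by rewrite -(size_tuple t) -(card_uniqP ut) max_card.
have ex : exists n, has_ipath n by exists (size P0); apply: has_size.
case: (ex_maxnP ex bounded) => n /existsP [t /induced_pathP ht] tmax.
exists t; rewrite size_tuple; split => //; first exact/tmax/has_size.
by move=> R /has_size; apply: tmax.
Qed.

Lemma max_ipath_last_nbr P w : induced_path P ->
  (forall R, induced_path R -> size R <= size P) -> 1 < size P ->
  w \notin P -> inv (nth x0 P (size P).-1) w -> inv (nth x0 P 0) w.
Proof.
move=> hP Pmax Psize wP iw; apply: contraT => nw.
suff /Pmax : induced_path (rcons P w) by rewrite size_rcons ltnn.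
apply: ipath_rcons => //; first lia.
move=> i hi; case: (eqVneq i (size P).-1) => [->//|hil].
case: (posnP i) => [->|hi0]; first exact: negbTE.
by apply/negbTE; apply: contra wP; apply: (ipath_interior hP hi0); lia.
Qed.

Lemma max_ipath_first_nbr P w : induced_path P ->
  (forall R, induced_path R -> size R <= size P) -> 1 < size P ->
  w \notin P -> inv (nth x0 P 0) w -> inv (nth x0 P (size P).-1) w.
Proof.
move=> hP Pmax Psize wP iw.
have := max_ipath_last_nbr (ipath_rev hP) (w := w).
rewrite size_rev mem_rev !nth_rev ?size_rev; [|lia|lia].
rewrite subn1 prednK ?subnn; [|lia]; apply => // R /Pmax; rewrite size_rev.
Qed.

Lemma max_ipath_closed P : induced_path P ->
  (forall R, induced_path R -> size R <= size P) -> 1 < size P ->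
  (forall y, inv (nth x0 P 0) y -> inv (nth x0 P (size P).-1) y -> y \in P) ->
  forall u w, u \in P -> inv u w -> w \in P.
Proof.
move=> hP Pmax Psize ends u w uP uw; apply: contraT => wP.
suff : w \in P by rewrite (negbTE wP).
move: uw; rewrite -(nth_index x0 uP); set i := index u P => uw.
have hi : i < size P by rewrite index_mem.
case: (posnP i) => [i0|i_pos].
  rewrite i0 in uw; apply: (ends w uw).
  exact: max_ipath_first_nbr.
case: (ltnP i.+1 (size P)) => hi1; first exact: (ipath_interior hP i_pos hi1 uw).
have il : i = (size P).-1 by lia.
rewrite il in uw; apply: (ends w) => //.
exact: max_ipath_last_nbr.
Qed.

Lemma closed_chain_homogeneous Q : 1 < size Q -> sorted inv Q ->
  (forall u w, u \in Q -> inv u w -> w \in Q) -> homogeneous e [set v in Q].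
Proof.
move=> Qsize /(sortedP x0) chain closed w; rewrite inE => wQ.
have wneq y : y \in Q -> y != w by move=> yQ; apply: contraNneq wQ => <-.
have ninv y : y \in Q -> ~~ inv y w by move=> yQ; apply: contra wQ; apply: closed.
have has_nbr y : y \in Q -> exists z, inv y z.
  move=> yQ; rewrite -(nth_index x0 yQ); set i := index y Q.
  have hi : i < size Q by rewrite index_mem.
  case: (ltnP i.+1 (size Q)) => hi1; first by exists (nth x0 Q i.+1); apply: chain.
  exists (nth x0 Q i.-1); rewrite invC -[in nth x0 Q i](@prednK i); last lia.
  by apply: chain; lia.
(* [w] has no backedge into [Q], and lies on one side of all of [Q] in [s1]. *)
have edge y : y \in Q -> e w y = (p w < p y).
  move=> yQ; have nwy : w != y by rewrite eq_sym wneq.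
  have [z yz] := has_nbr y yQ.
  have nb : ~~ b1 w y.
    by rewrite b1C; apply: (contraNN _ (ninv y yQ)) => b; apply: (backedge_inverted b yz).
  by rewrite (edge_backedge s1 nwy) (negbTE nb); case: (_ < _).
have side i : i < size Q -> (p (nth x0 Q i) < p w) = (p (nth x0 Q 0) < p w).
  elim: i => [//|i IH] hi; rewrite -IH; last lia.
  have Qi : nth x0 Q i \in Q by apply/mem_nth/ltnW.
  have Qi1 : nth x0 Q i.+1 \in Q by apply: mem_nth.
  symmetry; apply: (inverted_same_side o1 o2); rewrite 1?eq_sym ?ninv ?wneq //.
  by apply: chain.
have sideQ y : y \in Q -> (p y < p w) = (p (nth x0 Q 0) < p w).
  by move=> yQ; rewrite -(nth_index x0 yQ) side // index_mem.
case E: (p (nth x0 Q 0) < p w); [right|left] => y; rewrite inE => yQ.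
- by rewrite (edge_asym (wneq y yQ)) edge // (ltn_index_flip o1 (wneq y yQ)) sideQ ?E.
- by rewrite edge // (ltn_index_flip o1 (wneq y yQ)) sideQ ?E.
Qed.

Lemma closed_chain_cover Q : 1 < size Q -> sorted inv Q ->
  (forall u w, u \in Q -> inv u w -> w \in Q) -> forall v, v \in Q.
Proof.
move=> Qsize chain closed v.
case: (prime_e (closed_chain_homogeneous Qsize chain closed)) => [/card_le1_eqP Q1|QT]; last first.
  by have := in_setT v; rewrite -QT inE.
have Q01 : inv (nth x0 Q 0) (nth x0 Q 1) by move/(sortedP x0): chain; apply.
have := inverted_neq Q01; rewrite (Q1 (nth x0 Q 0) (nth x0 Q 1)) ?eqxx // inE.
- exact/mem_nth/ltnW.
- exact: mem_nth.
Qed.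

Section InversionCycle.
Variables (P : seq V) (y : V).
Hypotheses (hP : induced_path P) (Psize : 1 < size P) (yP : y \notin P).
Hypotheses (y_first : inv (nth x0 P 0) y) (y_last : inv (nth x0 P (size P).-1) y).
Local Notation x i := (nth x0 P i).
Local Notation k := (size P).

Let y_neq i : i < k -> x i != y.
Proof. by move=> hi; apply: contraNneq yP => <-; apply: mem_nth. Qed.

Lemma inversion_cycle_odd : odd k.
Proof.
have [m km] : exists m, k = m.+2 by exists k.-2; lia.
have first_alt : b1 (x 0) y != b1 (x 0) (x 1).
  by apply: (inverted_alternate y_first (ipath_inv hP _)); rewrite ?km // eq_sym y_neq ?km.
have last_alt : b1 (x m.+1) (x m) != b1 (x m.+1) y.
  apply: (inverted_alternate _ _ (y_neq _)); rewrite ?km //.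
  - by rewrite invC ipath_inv ?km.
  - by move: y_last; rewrite km.
have y_alt : b1 y (x 0) != b1 y (x m.+1).
  apply: inverted_alternate; rewrite 1?invC //.
  - by move: y_last; rewrite km.
  - by apply: (ipath_neq hP); rewrite ?km.
(* [b1] alternates at [x 0], at the last vertex and at [y], and along the path. *)
have parity := ipath_backedge_parity hP (i := m); rewrite km /= in parity.
move: first_alt last_alt y_alt (parity (ltnSn _)); rewrite km /= !(b1C y) (b1C (x m.+1) (x m)).
by case: (odd m); case: (b1 (x 0) y); case: (b1 (x 0) (x 1)); case: (b1 (x m.+1) y);
  case: (b1 (x m) (x m.+1)).
Qed.

Lemma inversion_cycle_short : k < 5.
Proof.
rewrite ltnNge; apply/negP => k5; have [m km] : exists m, k = m.+4.+1 by exists (k - 5); lia.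
have yl : inv (x m.+4) y by move: y_last; rewrite km.
have n20 : x 2 != x 0 by apply: (ipath_neq hP); rewrite ?km.
have n2l : x 2 != x m.+4 by apply: (ipath_neq hP); rewrite ?km.
have n2y : x 2 != y by apply: y_neq; rewrite km.
have y2 : ~~ inv y (x 2) by rewrite invC; apply: contra yP; apply: (ipath_interior hP); rewrite ?km.
have n02 : ~~ inv (x 0) (x 2) by apply: (ipath_ninv hP); rewrite ?km.
have nl2 : ~~ inv (x m.+4) (x 2) by rewrite invC; apply: (ipath_ninv hP); rewrite ?km.
have y0 : inv y (x 0) by rewrite invC.
have A := inverted_same_side o1 o2 y0 y2 n02 n2y n20.
have B := inverted_same_side o1 o2 yl nl2 y2 n2l n2y.
(* [x 2] is on the same side of [y], [x 0] and [x m.+4] in [s1], but [x 0] and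
   [x m.+4] are on opposite sides of [x 2]. *)
have D : (p (x 2) < p (x m.+4)) = (p (x 0) < p (x 2)) by apply: (ipath_index_far hP); rewrite ?km.
by move: (ltn_index_flip o1 n2l); rewrite B A -D; case: (_ < _).
Qed.

Lemma inversion_cycle_size : k = 3.
Proof.
by have := inversion_cycle_odd; have := inversion_cycle_short; case: k Psize => [|[|[|[|[|]]]]].
Qed.

Lemma inversion_cycle_closed u w : u \in y :: P -> inv u w -> w \in y :: P.
Proof.
have xP i : i < k -> x i \in y :: P by move=> hi; rewrite inE mem_nth ?orbT.
have end_closed i j : i < k -> j < k -> i != j -> inv (x i) (x j) -> inv (x i) y ->
    inv (x i) w -> w \in y :: P.
  move=> hi hj nij ij iy /(inverted_deg2 ij iy (y_neq hj)) /orP[] /eqP ->.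
  - exact: xP.
  - by rewrite inE eqxx.
rewrite inE => /orP[/eqP ->|uP].
  have n0l : x 0 != x k.-1 by apply: (ipath_neq hP); lia.
  have y0 : inv y (x 0) by rewrite invC.
  have yl : inv y (x k.-1) by rewrite invC.
  by move=> /(inverted_deg2 y0 yl n0l) /orP[] /eqP ->; apply: xP; lia.
rewrite -(nth_index x0 uP); set i := index u P; have hi : i < k by rewrite index_mem.
case: (posnP i) => [-> u0|i_pos].
  by apply: (end_closed 0 1) => //; [lia|apply: (ipath_inv hP)].
case: (ltnP i.+1 k) => [hi1 uw|hik].
  by rewrite inE (ipath_interior hP i_pos hi1 uw) orbT.
have -> : i = (k.-2).+1 by lia.
apply: (end_closed _ k.-2); [lia|lia|lia| |by rewrite prednK; lia].
by rewrite invC; apply: (ipath_inv hP); lia.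
Qed.

Lemma inversion_cycle_P4 : iso_to_Pn e 4.
Proof.
have k3 := inversion_cycle_size.
have P3 : P = [:: x 0; x 1; x 2] by apply: (eq_from_nth (x0 := x0)); rewrite k3 // => -[|[|[|i]]].
have inv01 : inv (x 0) (x 1) by apply: (ipath_inv hP); lia.
have inv12 : inv (x 1) (x 2) by apply: (ipath_inv hP); lia.
have y1 : ~~ inv (x 1) y by apply: contra yP; apply: (ipath_interior hP); lia.
have y0 : inv y (x 0) by rewrite invC.
have y2 : inv (x 2) y by move: y_last; rewrite k3.
have y_cycle : sorted inv (y :: P) by rewrite P3 /= invC y_first inv01 inv12.
have ysize : 1 < size (y :: P) by rewrite /= k3.
have cover := closed_chain_cover ysize y_cycle inversion_cycle_closed.
rewrite P3 in cover; apply: (iso_P4_of_cycle (a := y) (b := x 0) (c := x 1) (d := x 2)) => //.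
- by rewrite -P3 /= yP (proj1 hP).
- by apply: (inverted_orient y0 inv01); rewrite 1?invC // eq_sym y_neq ?k3.
- by rewrite (ipath_edge_consec hP (i := 1)) ?k3.
- by apply: inverted_orient inv12 y2 y1 _; rewrite y_neq ?k3.
Qed.

End InversionCycle.

Lemma closed_ipath_Pn P : induced_path P -> 1 < size P ->
  (forall u w, u \in P -> inv u w -> w \in P) -> iso_to_Pn e (size P).
Proof.
move=> hP Psize closed.
have n10 : nth x0 P 1 != nth x0 P 0 by apply: (ipath_neq hP); lia.
wlog back : P hP Psize closed n10 / e (nth x0 P 1) (nth x0 P 0).
  move=> base; have [|fwd] := boolP (e (nth x0 P 1) (nth x0 P 0)); first exact: base.
  have lastP : size P - 1 = (size P - 2).+1 by lia.
  rewrite -size_rev; apply: base; rewrite ?size_rev ?nth_rev // ?lastP; try lia.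
  - exact: ipath_rev.
  - by move=> u w; rewrite !mem_rev; apply: closed.
  - by rewrite eq_sym (ipath_neq hP) //; lia.
  - by rewrite (ipath_edge_consec hP); [rewrite -[e _ _]negbK -(edge_asym n10) | lia].
have cover := closed_chain_cover Psize (ipath_sorted hP) closed.
have consec i : i.+1 < size P -> e (nth x0 P i.+1) (nth x0 P i).
  move=> hi; have ni : nth x0 P i.+1 != nth x0 P i by apply: (ipath_neq hP); lia.
  by rewrite (edge_asym ni) (ipath_edge_consec hP hi) -(edge_asym n10).
apply: (iso_Pn_of_listing (x0 := x0)) => //; first exact: (proj1 hP).
(* Were the far edges backwards, the last vertex of the path would be a source. *)
move=> i j ij jP; rewrite (ipath_edge_far hP ij jP); apply: contraT => /negbTE fwd.
have cardV : #|V| = size P.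
  by rewrite -(card_uniqP (proj1 hP)); apply: eq_card => v; rewrite cover.
case: (prime_no_source (v := nth x0 P (size P).-1)); first lia.
move=> w; rewrite -(nth_index x0 (cover w)).
have : index w P < size P by rewrite index_mem.
move: (index w P) => l hl nw.
have l_last : l < (size P).-1.
  by case: (ltngtP l (size P).-1) nw => [//|gt _|->]; [lia|rewrite eqxx].
case: (eqVneq l.+1 (size P).-1) => [<-|nl]; first by apply: consec; lia.
by rewrite eq_sym in nw; rewrite (edge_asym nw) (ipath_edge_far hP) ?fwd //; lia.
Qed.

Lemma distinct_matching_orderings_Pn : s1 != s2 -> exists n, iso_to_Pn e n.
Proof.
move=> s12; have [a [b iab]] : exists a b, inv a b.
  have [/existsP[a /existsP[b iab]]|/existsPn noinv] := boolP [exists a, exists b, inv a b].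
    by exists a, b.
  by move: s12; rewrite (no_inversion_eq o1 o2 x0) ?eqxx // => u v; move/existsPn: (noinv u).
have ab : induced_path [:: a; b].
  split; first by rewrite /= inE andbT (inverted_neq iab).
  by move=> [|[|i]] [|[|j]] //= _ _; rewrite ?(invC b a) ?iab // /inverted !ltnn.
have [P [hP Psize Pmax]] := exists_max_ipath ab.
have [/existsP[y /and3P[y0 yl yP]]|/existsPn ends] :=
  boolP [exists y, [&& inv (nth x0 P 0) y, inv (nth x0 P (size P).-1) y & y \notin P]].
  by exists 4; apply: (inversion_cycle_P4 hP Psize yP y0 yl).
exists (size P); apply: closed_ipath_Pn => //; apply: max_ipath_closed => // y y0 yl.
by move: (ends y); rewrite y0 yl negbK.
Qed.
End MatchingPair.
End Tournament.

Theorem corollary5p5 (V : finType) (e : rel V) :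
  tournament e -> prime_tournament e ->
  (forall n : nat, ~ iso_to_Pn e n) ->
  forall s1 s2 : seq V, matching_ordering e s1 -> matching_ordering e s2 -> s1 = s2.
Proof.
move=> tourn prime_e not_Pn s1 s2 m1 m2; apply/eqP; apply: contraT => s12.
have [x0 _] := card_gt0P (proj1 tourn).
have [n iso] := distinct_matching_orderings_Pn tourn prime_e x0 m1 m2 s12.
by case: (not_Pn n iso).
Qed.
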